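(* Let $G$ be a finite, simple, connected graph of order $n\ge 2$. Then $\dim_{wt}(G)=n$ if and only if every vertex of $G$ is a twin.
   Context: $d(x,y)$ is the shortest-path distance and $N(x)$ the set of neighbors of $x$. A set $W\subseteq V(G)$ is a resolving set if for every two distinct vertices $y,z$ there is $x\in W$ with $d(y,x)\ne d(z,x)$. A set $W$ is a weak total resolving set (WTR-set) if $W$ is resolving and, for every $w\in W$ and every $x\in V(G)\setminus W$, there is $w'\in W\setminus\{w\}$ with $d(x,w')\ne d(w,w')$. $\dim_{wt}(G)$ is the minimum cardinality of a WTR-set. Two distinct vertices $u,v$ are twins if $N(u)\setminus\{v\}=N(v)\setminus\{u\}$; a vertex $u$ is a twin if there exists $v\ne u$ such that $u,v$ are twins. *)

From mathcomp Require Import all_boot.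
Set Implicit Arguments. Unset Strict Implicit. Unset Printing Implicit Defensive.

(* A simple graph on a finite vertex type T is given by an adjacency relation e,
   assumed symmetric and irreflexive in the theorem. *)
Section Graph.
Variables (T : finType) (e : rel T).

Fixpoint ball (k : nat) (x : T) : {set T} :=
  if k is k'.+1 then ball k' x :|: [set z | [exists y in ball k' x, e y z]]
  else [set x].

(* shortest-path distance: least k with y within k steps of x
   (well-defined for connected graphs, since k < #|T| suffices) *)
Definition dist (x y : T) : nat := find (fun k => y \in ball k x) (iota 0 #|T|).

Definition neighbors (x : T) : {set T} := [set y | e x y].

Definition resolving (W : {set T}) : bool :=
  [forall y, forall z, (y != z) ==> [exists x in W, dist y x != dist z x]].

Definition weak_total_resolving (W : {set T}) : bool :=
  resolving W &&
  [forall w in W, forall x in ~: W,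
     [exists w' in W :\ w, dist x w' != dist w w']].

(* the whole vertex set is always a WTR-set, so the minimum exists *)
Definition dim_wt : nat :=
  #| [arg min_(W < [set: T] | weak_total_resolving W) #|W|] |.

Definition twins (u v : T) : bool :=
  (u != v) && (neighbors u :\ v == neighbors v :\ u).

Definition is_twin (u : T) : bool := [exists v, twins u v].

End Graph.

From mathcomp Require Import all_boot.
Set Implicit Arguments. Unset Strict Implicit. Unset Printing Implicit Defensive.

(* Twins are at the same distance from every other vertex, so a WTR-set cannot
   omit a twin x: if its twin v is in W, the totality condition for (v, x)
   fails; otherwise no vertex of W resolves x and v.  Conversely, if v has no
   twin, then V \ {v} is a WTR-set: for w <> v some vertex z <> v, w is adjacent
   to exactly one of v, w, hence at distance 1 from exactly one of them. *)

Section WeakTotalResolving.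
Variables (T : finType) (e : rel T).

Lemma mem_ball_center k x : x \in ball e k x.
Proof. by elim: k => [|k IH] /=; rewrite ?in_set1 ?inE ?IH. Qed.

Lemma twins_sym u v : twins e u v -> twins e v u.
Proof. by case/andP=> uv /eqP Nuv; rewrite /twins eq_sym uv Nuv eqxx. Qed.

Lemma twins_adj u v x : twins e u v -> x != v -> e u x -> e v x.
Proof.
case/andP=> _ /eqP Nuv xv ux.
have : x \in neighbors e u :\ v by rewrite !inE xv ux.
by rewrite Nuv !inE => /andP [].
Qed.

Lemma ball_twins k u v x : twins e u v -> x != u -> x != v ->
  x \in ball e k u -> x \in ball e k v.
Proof.
move=> tw; elim: k x => [|k IH] x xu xv /=; first by rewrite in_set1 (negbTE xu).
rewrite !inE => /orP [/IH -> //|/existsP [y /andP [yb yx]]].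
apply/orP; right; apply/existsP.
have [Eyu|yu] := eqVneq y u.
  by exists v; rewrite mem_ball_center (twins_adj tw xv) // -Eyu.
have [Eyv|yv] := eqVneq y v; first by exists v; rewrite mem_ball_center -Eyv.
by exists y; rewrite yx IH.
Qed.

Lemma dist_twins u v x : twins e u v -> x != u -> x != v ->
  dist e u x = dist e v x.
Proof.
move=> tw xu xv; apply: eq_find => k /=; apply/idP/idP; first exact: ball_twins.
exact: (ball_twins (twins_sym tw)).
Qed.

Lemma dist_eq0 x y : (dist e x y == 0) = (y == x).
Proof.
have n0 : 0 < #|T| by apply/card_gt0P; exists x.
by rewrite /dist -(prednK n0) /= in_set1; case: (y == x).
Qed.

Lemma dist_xx x : dist e x x = 0.
Proof. by apply/eqP; rewrite dist_eq0. Qed.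

Lemma dist_eq1 x y : 1 < #|T| -> x != y -> (dist e x y == 1) = e x y.
Proof.
move=> n2 xy; rewrite /dist -(subnK n2) addn2 /= !inE.
rewrite [y == x]eq_sym (negbTE xy) /=.
have -> : [exists y0 in [set x], e y0 y] = e x y.
  apply/existsP/idP => [[z /andP []]|exy]; first by rewrite inE => /eqP ->.
  by exists x; rewrite inE eqxx exy.
by case: (e x y).
Qed.

Lemma resolving_of_cover (W : {set T}) :
  (forall y z, y != z -> (y \in W) || (z \in W)) -> resolving e W.
Proof.
move=> cover; apply/forallP => y; apply/forallP => z; apply/implyP => yz.
have sep a b : a != b -> dist e a a != dist e b a.
  by move=> ab; rewrite dist_xx eq_sym dist_eq0.
apply/existsP; case/orP: (cover y z yz) => [yW|zW]; first by exists y; rewrite yW sep.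
by exists z; rewrite zW eq_sym sep // eq_sym.
Qed.

Lemma wtr_setT : weak_total_resolving e [set: T].
Proof.
apply/andP; split; first by apply: resolving_of_cover => y z _; rewrite inE.
by apply/forall_inP => w _; apply/forall_inP => x; rewrite !inE.
Qed.

Lemma dim_wt_eq_card :
  dim_wt e = #|T| <-> forall W, weak_total_resolving e W -> W = [set: T].
Proof.
rewrite /dim_wt; case: (arg_minnP _ wtr_setT) => W0 wtrW0 minW0; split.
  move=> W0T W wtrW; apply/eqP; rewrite eqEcard subsetT cardsT -W0T.
  exact: minW0.
by move/(_ _ wtrW0) ->; rewrite cardsT.
Qed.

Lemma twin_mem_wtr (W : {set T}) x v :
  twins e x v -> weak_total_resolving e W -> x \in W.
Proof.
move=> tw /andP [/forallP res /forall_inP tot]; apply/negPn/negP => xW.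
have xv : x != v by case/andP: tw.
have notx w : w \in W -> w != x by apply: contraTneq => ->.
case vW: (v \in W).
  have /forall_inP/(_ x) := tot v vW; rewrite inE => /(_ xW) /existsP [w].
  rewrite !inE => /andP [/andP [wv wW]].
  by rewrite (dist_twins tw) ?eqxx ?notx.
have /forallP/(_ v) := res x; rewrite xv => /existsP [w /andP [wW]].
by rewrite (dist_twins tw) ?eqxx ?notx //; apply: contraTneq wW => ->; rewrite vW.
Qed.

Hypothesis e_irr : irreflexive e.

Lemma not_twins_sep u v : u != v -> ~~ twins e u v ->
  exists z, [/\ z != u, z != v & e u z != e v z].
Proof.
move=> uv ntw; have [z Nz] : exists z,
    (z \in neighbors e u :\ v) != (z \in neighbors e v :\ u).
  apply/existsP; apply: contraR ntw => /existsPn Nuv.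
  by rewrite /twins uv; apply/eqP/setP => z; exact/eqP/negPn/Nuv.
move: Nz; rewrite !inE.
have [->|zu] := eqVneq z u; first by rewrite e_irr andbF.
have [->|zv] := eqVneq z v; first by rewrite e_irr andbF.
by exists z.
Qed.

Hypothesis n_ge2 : 1 < #|T|.

Lemma dist_adj_nonadj a b z : e a z -> ~~ e b z -> z != b ->
  dist e a z != dist e b z.
Proof.
move=> az bz zb; have za : a != z by apply: contraTneq az => ->; rewrite e_irr.
apply: contraNneq bz => Dab.
have bNz : b != z by rewrite eq_sym.
by rewrite -(dist_eq1 n_ge2 bNz) -Dab dist_eq1.
Qed.

Lemma wtr_setC1 v : ~~ is_twin e v -> weak_total_resolving e [set~ v].
Proof.
move=> ntw; apply/andP; split.
  apply: resolving_of_cover => y z; rewrite !inE.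
  by apply: contraR; rewrite negb_or !negbK => /andP [/eqP -> /eqP ->].
apply/forall_inP => w; rewrite !inE => wv; apply/forall_inP => x.
rewrite !inE negbK => /eqP ->.
have [z [zv zw Nz]] : exists z, [/\ z != v, z != w & e v z != e w z].
  apply: not_twins_sep; first by rewrite eq_sym.
  by apply: contra ntw => tw; apply/existsP; exists w.
apply/existsP; exists z; rewrite !inE zv zw /=.
move: Nz; case evz: (e v z); case ewz: (e w z) => // _.
  by rewrite dist_adj_nonadj ?evz ?ewz.
by rewrite eq_sym dist_adj_nonadj ?evz ?ewz.
Qed.

End WeakTotalResolving.

Theorem theorem4 (T : finType) (e : rel T)
  (e_sym : symmetric e) (e_irr : irreflexive e)
  (e_conn : forall x y : T, connect e x y)
  (n_ge2 : 2 <= #|T|) :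
  dim_wt e = #|T| <-> (forall v : T, is_twin e v).
Proof.
split=> [/dim_wt_eq_card full v | twin]; last apply/dim_wt_eq_card => W wtrW.
  apply: contraT => ntw.
  have := full _ (wtr_setC1 e_irr n_ge2 ntw).
  by move/setP/(_ v); rewrite !inE eqxx.
apply/setP => x; rewrite inE.
by have /existsP [v tw] := twin x; apply: twin_mem_wtr tw wtrW.
Qed.
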